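(* If $A$ is a principal ideal domain and $I$ is an ideal of $A$, then the quotient ring $A/I$ is a BL-ring.
   Context: For a commutative unitary ring $R$, its ideals $Id(R)$ form a residuated lattice $(Id(R),\cap,+,\otimes,\rightarrow,\{0\},R)$, ordered by inclusion, where $I+J$ is the ideal sum, $I\otimes J$ the ideal product, and $I\rightarrow J=(J:I)=\{x\in R: xI\subseteq J\}$. A BL-algebra is a residuated lattice satisfying prelinearity $(x\rightarrow y)\vee(y\rightarrow x)=1$ and divisibility $x\odot(x\rightarrow y)=x\wedge y$. A BL-ring is a commutative unitary ring whose lattice of ideals, with this structure, is a BL-algebra. *)

From HB Require Import structures.
From mathcomp Require Import all_boot all_order all_algebra.
From mathcomp Require Import generic_quotient ring_quotient.
Set Implicit Arguments. Unset Strict Implicit. Unset Printing Implicit Defensive.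
Import GRing.Theory.
Local Open Scope ring_scope.
Local Open Scope quotient_scope.

Definition is_ideal (R : comPzRingType) (I : R -> Prop) : Prop :=
  [/\ I 0, (forall x y, I x -> I y -> I (x + y)) & (forall a x, I x -> I (a * x))].

Definition ideal_eq (R : comPzRingType) (I J : R -> Prop) : Prop :=
  forall x, I x <-> J x.

Definition ideal_top (R : comPzRingType) : R -> Prop := fun _ => True.

Definition ideal_meet (R : comPzRingType) (I J : R -> Prop) : R -> Prop :=
  fun x => I x /\ J x.

Definition ideal_sum (R : comPzRingType) (I J : R -> Prop) : R -> Prop :=
  fun x => exists y z, [/\ I y, J z & x = y + z].

Definition ideal_prod (R : comPzRingType) (I J : R -> Prop) : R -> Prop :=
  fun x => exists s : seq (R * R),
    (forall p, p \in s -> I p.1 /\ J p.2) /\ x = \sum_(p <- s) p.1 * p.2.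

Definition ideal_res (R : comPzRingType) (I J : R -> Prop) : R -> Prop :=
  fun x => forall y, I y -> J (x * y).

(* BL-ring: Id(R) (a residuated lattice) satisfies prelinearity
   (I -> J) v (J -> I) = R and divisibility I (x) (I -> J) = I /\ J. *)
Definition BL_ring (R : comPzRingType) : Prop :=
  forall I J : R -> Prop, is_ideal I -> is_ideal J ->
    ideal_eq (ideal_sum (ideal_res I J) (ideal_res J I)) (@ideal_top R) /\
    ideal_eq (ideal_prod I (ideal_res I J)) (ideal_meet I J).

Definition principal_ideal_domain (A : idomainType) : Prop :=
  forall I : A -> Prop, is_ideal I ->
    exists a : A, ideal_eq I (fun x => exists r, x = r * a).

(* MathComp's {ideal_quot I} only allows proper ideals (nonzero rings); *)
(* we build the quotient as a comPzRingType to cover I = A as well.    *)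

HB.mixin Record isMulIdeal (R : comPzRingType) (S : R -> bool) := {
  pzideal_mul : forall a u, u \in S -> a * u \in S
}.

#[short(type="pzideal")]
HB.structure Definition PzIdeal (R : comPzRingType) :=
  {S of GRing.ZmodClosed R S & isMulIdeal R S}.

Section QuotRing.
Variables (R : comPzRingType) (I : pzideal R).

Definition quot_ring := Quotient.quot (I : zmodClosed R).

HB.instance Definition _ := Choice.on quot_ring.
HB.instance Definition _ := GRing.Zmodule.on quot_ring.
HB.instance Definition _ :=
  EqQuotient.on quot_ring.

Local Notation Q := quot_ring.

Definition qone : Q := lift_cst Q 1.
Definition qmul := lift_op2 Q *%R.

Canonical qpi_one_morph := PiConst qone.

Lemma qpi_mul : {morph \pi_Q : x y / x * y >-> qmul x y}.
Proof.
move=> x y; unlock qmul; apply/eqP; rewrite piE Quotient.equivE.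
rewrite -[_ * _](addrNK (x * repr (\pi_Q y))) -mulrBr.
rewrite -addrA -mulrBl rpredD //.
  by rewrite pzideal_mul // Quotient.idealrDE opprK reprK.
by rewrite mulrC pzideal_mul // Quotient.idealrDE opprK reprK.
Qed.
Canonical qpi_mul_morph := PiMorph2 qpi_mul.

Lemma qmulA : associative qmul.
Proof. by move=> x y z; rewrite -[x]reprK -[y]reprK -[z]reprK !piE mulrA. Qed.

Lemma qmulC : commutative qmul.
Proof. by move=> x y; rewrite -[x]reprK -[y]reprK !piE mulrC. Qed.

Lemma qmul1 : left_id qone qmul.
Proof. by move=> x; rewrite -[x]reprK !piE mul1r. Qed.

Lemma qmulDl : left_distributive qmul +%R.
Proof.
move=> x y z; rewrite -[x]reprK -[y]reprK -[z]reprK.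
by apply/eqP; rewrite piE /= mulrDl Quotient.equivE subrr rpred0.
Qed.

HB.instance Definition _ := GRing.Zmodule_isComPzRing.Build quot_ring
  qmulA qmulC qmul1 qmulDl.

End QuotRing.

(* In a ring whose ideals are all principal both BL axioms reduce to statements
   about generators: (J : (a)) = {x | x a in J}, so (a) (J : (a)) = (a) /\ J
   holds outright (write x in (a) /\ J as r a and note r in (J : (a))), and
   prelinearity for (a), (b) amounts to u + v = 1 with u a in (b), v b in (a).
   In a PID these u, v come from Bezout: if (a, b) = (g) = (s a + t b) with
   a = a' g and b = b' g, take u = t b', v = s a'.  Both properties pass to
   the quotient A/I along the surjection A -> A/I. *)

From HB Require Import structures.
From mathcomp Require Import all_boot all_order all_algebra.
From mathcomp Require Import generic_quotient ring_quotient.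
Set Implicit Arguments. Unset Strict Implicit. Unset Printing Implicit Defensive.
Import GRing.Theory.
Local Open Scope ring_scope.
Local Open Scope quotient_scope.

Section PrincipalIdeals.
Variable R : comPzRingType.
Implicit Types (a b x : R) (I J K L : R -> Prop).

Definition principal_ideal a : R -> Prop := fun x => exists r, x = r * a.

Definition principal_ideal_ring : Prop :=
  forall I, is_ideal I -> exists a, ideal_eq I (principal_ideal a).

Definition principal_prelinear : Prop :=
  forall a b, exists u v,
    [/\ u + v = 1, principal_ideal b (u * a) & principal_ideal a (v * b)].

Lemma generator_in_ideal a I : ideal_eq I (principal_ideal a) -> I a.
Proof. by move=> hI; apply/hI; exists 1; rewrite mul1r. Qed.

Lemma ideal_res_principal a I J x : ideal_eq I (principal_ideal a) ->
  is_ideal J -> ideal_res I J x <-> J (x * a).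
Proof.
move=> hI [_ _ JM]; split=> [hx | Jxa y /hI [t ->]].
  exact/hx/(generator_in_ideal hI).
by rewrite mulrCA; apply: JM.
Qed.

Lemma ideal_prod_sub I K L x : is_ideal L ->
  (forall y z, I y -> K z -> L (y * z)) -> ideal_prod I K x -> L x.
Proof.
move=> [L0 LD _] hL [s [hs ->]]; rewrite big_seq.
by apply: big_ind => // p /hs [Ip Kp]; apply: hL.
Qed.

Lemma ideal_divisibility_principal a I J : ideal_eq I (principal_ideal a) ->
  is_ideal I -> is_ideal J ->
  ideal_eq (ideal_prod I (ideal_res I J)) (ideal_meet I J).
Proof.
move=> hI iI iJ x; split=> [hx | [Ix Jx]].
  split; apply: (ideal_prod_sub _ _ hx) => // y z Iy hz.
    by case: iI => _ _ IM; rewrite mulrC; apply: IM.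
  by rewrite mulrC; apply: hz.
have /hI [r xE] := Ix; exists [:: (a, r)]; split; last by rewrite big_seq1 mulrC.
move=> p; rewrite inE => /eqP -> /=; split; first exact: generator_in_ideal hI.
by apply/(ideal_res_principal _ hI iJ); rewrite -xE.
Qed.

Lemma ideal_prelinearity_principal a b I J :
  ideal_eq I (principal_ideal a) -> ideal_eq J (principal_ideal b) ->
  is_ideal I -> is_ideal J ->
  (exists u v,
    [/\ u + v = 1, principal_ideal b (u * a) & principal_ideal a (v * b)]) ->
  ideal_eq (ideal_sum (ideal_res I J) (ideal_res J I)) (@ideal_top R).
Proof.
move=> hI hJ iI iJ [u [v [uv1 [k ua] [l vb]]]] z; split=> // _.
exists (z * u), (z * v); split; last by rewrite -mulrDr uv1 mulr1.
  by apply/(ideal_res_principal _ hI iJ)/hJ; exists (z * k); rewrite -mulrA ua mulrA.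
by apply/(ideal_res_principal _ hJ iI)/hI; exists (z * l); rewrite -mulrA vb mulrA.
Qed.

Lemma BL_ring_principal :
  principal_ideal_ring -> principal_prelinear -> BL_ring R.
Proof.
move=> hP hL I J iI iJ; have [a hI] := hP I iI; have [b hJ] := hP J iJ.
split; first exact: ideal_prelinearity_principal hI hJ iI iJ (hL a b).
exact: ideal_divisibility_principal hI iI iJ.
Qed.

End PrincipalIdeals.

Section SurjectiveImage.
Variables (R S : comPzRingType) (f : {rmorphism R -> S}).
Hypothesis f_surj : forall y, exists x, f x = y.

Lemma preimage_is_ideal (J : S -> Prop) : is_ideal J -> is_ideal (fun x => J (f x)).
Proof.
case=> J0 JD JM; split; first by rewrite rmorph0.
  by move=> x y Jx Jy; rewrite rmorphD; apply: JD.
by move=> a x Jx; rewrite rmorphM; apply: JM.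
Qed.

Lemma principal_ideal_ring_surj :
  principal_ideal_ring R -> principal_ideal_ring S.
Proof.
move=> hP J iJ; have [a ha] := hP _ (preimage_is_ideal iJ).
exists (f a) => y; split.
  by have [x <-] := f_surj y; move/ha => [r ->]; exists (f r); rewrite rmorphM.
by case: iJ => _ _ JM [r ->]; apply/JM/(generator_in_ideal ha).
Qed.

Lemma principal_prelinear_surj :
  principal_prelinear R -> principal_prelinear S.
Proof.
move=> hL a' b'; have [a <-] := f_surj a'; have [b <-] := f_surj b'.
have [u [v [uv1 [k ua] [l vb]]]] := hL a b.
exists (f u), (f v); split; first by rewrite -rmorphD uv1 rmorph1.
  by exists (f k); rewrite -!rmorphM ua.
by exists (f l); rewrite -!rmorphM vb.
Qed.

End SurjectiveImage.

Lemma pid_principal_prelinear (A : idomainType) :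
  principal_ideal_ring A -> principal_prelinear A.
Proof.
move=> hP a b.
pose L := fun x : A => exists s t, x = s * a + t * b.
have iL : is_ideal L.
  split; first by exists 0, 0; rewrite !mul0r addr0.
    by move=> _ _ [s [t ->]] [s' [t' ->]]; exists (s + s'), (t + t'); rewrite !mulrDl addrACA.
  by move=> c _ [s [t ->]]; exists (c * s), (c * t); rewrite mulrDr !mulrA.
have [g hg] := hP L iL.
have [s [t gE]] : L g := generator_in_ideal hg.
have [a' aE] : principal_ideal g a by apply/hg; exists 1, 0; rewrite mul1r mul0r addr0.
have [b' bE] : principal_ideal g b by apply/hg; exists 0, 1; rewrite mul1r mul0r add0r.
have [g0 | gN0] := eqVneq g 0.
  exists 1, 0; rewrite addr0 mul0r; split=> //; last by exists 0; rewrite mul0r.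
  by exists 0; rewrite aE g0 !mulr0 mul0r.
exists (t * b'), (s * a'); split.
- by apply: (mulIf gN0); rewrite mul1r [RHS]gE aE bE mulrDl addrC !mulrA.
- by exists (t * a'); rewrite aE bE !mulrA (mulrAC t b' a').
- by exists (s * b'); rewrite aE bE !mulrA (mulrAC s a' b').
Qed.

Section QuotientMap.
Variables (R : comPzRingType) (I : pzideal R).

Definition quot_pi : R -> quot_ring I := \pi.

Lemma quot_pi_is_zmod_morphism : zmod_morphism quot_pi.
Proof. by move=> x y; rewrite /quot_pi !piE. Qed.

Lemma quot_pi_is_monoid_morphism : monoid_morphism quot_pi.
Proof. by split=> [|x y]; rewrite /quot_pi !piE. Qed.

HB.instance Definition _ :=
  GRing.isZmodMorphism.Build R (quot_ring I) quot_pi quot_pi_is_zmod_morphism.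
HB.instance Definition _ :=
  GRing.isMonoidMorphism.Build R (quot_ring I) quot_pi quot_pi_is_monoid_morphism.

Lemma quot_pi_surj (y : quot_ring I) : exists x, quot_pi x = y.
Proof. by exists (repr y); rewrite /quot_pi reprK. Qed.

End QuotientMap.

Theorem corollary3p8 (A : idomainType) (I : pzideal A) :
  principal_ideal_domain A -> BL_ring (quot_ring I).
Proof.
move=> hPID; have pi_surj := @quot_pi_surj A I.
apply: BL_ring_principal.
  exact: principal_ideal_ring_surj pi_surj hPID.
exact: principal_prelinear_surj pi_surj (pid_principal_prelinear hPID).
Qed.
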